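(* Let $\Omega = [a,b)$ be a bounded interval with periodic boundary conditions, let $k \ge 0$ be an integer, let $T_k$ be the space of real-valued trigonometric polynomials on $\Omega$ of degree at most $k$, let $P$ denote the $L^2(\Omega)$-orthogonal projection onto $T_k$, and let $\beta \in \mathbb{R}$. Let $(v,w) \colon I \to T_k \times T_k$ (with $I$ an open time interval) be a continuously differentiable solution of the Fourier Galerkin semidiscretization of the nonlinear Schrödinger equation $\mathrm{i} u_t + u_{xx} + \beta |u|^2 u = 0$ written for $u = v + \mathrm{i} w$, \[ \begin{aligned} \partial_t v &= -w_{xx} - \beta P \bigl( (v^2 + w^2) w \bigr), \\ \partial_t w &= v_{xx} + \beta P \bigl( (v^2 + w^2) v \bigr). \end{aligned} \] Then the mass, momentum, and energy \[ \mathcal{M} = \int_\Omega ( v^2 + w^2 ) \,\mathrm{d}x, \qquad \mathcal{P} = \int_\Omega ( v w_x - w v_x ) \,\mathrm{d}x, \qquad \mathcal{E} = \int_\Omega \Bigl( v_x^2 + w_x^2 - \frac{\beta}{2} ( v^2 + w^2 )^2 \Bigr) \mathrm{d}x \] are constant in time along $(v,w)$.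
   Context: The semidiscretization is an ODE on the finite-dimensional space $T_k \times T_k$. *)

From Stdlib Require Import Reals Lra.
From Coquelicot Require Import Coquelicot.
Open Scope R_scope.

(* Real trigonometric basis on Omega = [a,b) (periodic, length L = b - a):
   index 0        : 1
   index 2j+1     : cos (2 pi (j+1) (x-a)/L)
   index 2j+2     : sin (2 pi (j+1) (x-a)/L)
   Indices 0 .. 2k span T_k (trig. polynomials of degree <= k).
   This basis is L^2(Omega)-orthogonal. *)
Definition trig_basis (a b : R) (n : nat) (x : R) : R :=
  match n with
  | O => 1
  | S m =>
      let freq := 2 * PI * INR (Nat.div2 m + 1) * (x - a) / (b - a) in
      if Nat.even m then cos freq else sin freq
  end.

Definition trig_poly (k : nat) (a b : R) (c : nat -> R) (x : R) : R :=
  sum_n (fun n => c n * trig_basis a b n x) (2 * k).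

(* L^2(Omega)-orthogonal projection onto T_k, expanded in the orthogonal
   basis trig_basis: P f = sum_n (<f,e_n>/<e_n,e_n>) e_n. *)
Definition L2proj (k : nat) (a b : R) (f : R -> R) (x : R) : R :=
  trig_poly k a b
    (fun n => RInt (fun y => f y * trig_basis a b n y) a b
              / RInt (fun y => trig_basis a b n y ^ 2) a b) x.

Definition in_open_interval (lo hi : Rbar) (t : R) : Prop :=
  Rbar_lt lo t /\ Rbar_lt t hi.

Definition mass (a b : R) (v w : R -> R) : R :=
  RInt (fun x => v x ^ 2 + w x ^ 2) a b.

Definition momentum (a b : R) (v w : R -> R) : R :=
  RInt (fun x => v x * Derive w x - w x * Derive v x) a b.

Definition energy (a b beta : R) (v w : R -> R) : R :=
  RInt (fun x => Derive v x ^ 2 + Derive w x ^ 2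
                 - beta / 2 * (v x ^ 2 + w x ^ 2) ^ 2) a b.

(* Each of the three quantities is the integral over Ω of a polynomial density q in
   v, w, v_x, w_x. Since v and w are finite sums of coefficients of t times fixed
   trigonometric functions of x, so is q, and d/dt commutes with the integral.
   Inserting the Galerkin equations writes ∂_t q as the x-derivative of a periodic
   flux G plus terms c p (P f - f) with p ∈ T_k. The flux integrates to
   G(b) - G(a) = 0, and every other term integrates to 0 because P is the
   L²-orthogonal projection onto T_k, which rests on the orthogonality of the
   trigonometric basis. *)

From Stdlib Require Import Reals Lra Lia List.
From Coquelicot Require Import Coquelicot.
Open Scope R_scope.

(* Coquelicot states many equalities at a canonical-structure carrier
   convertible to [R], which [ring] and [field] do not recognize as [R]. *)
Ltac R_eq := match goal with |- @eq _ ?x ?y => change (@eq R x y) end.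

(** * Trigonometric polynomials *)

Lemma sum_n_double_S (f : nat -> R) k :
  sum_n f (2 * S k) = sum_n f (2 * k) + f (2 * k + 1)%nat + f (2 * k + 2)%nat.
Proof.
  replace (2 * S k)%nat with (S (S (2 * k))) by lia.
  rewrite 2!sum_Sn; unfold plus; simpl.
  do 3 f_equal; lia.
Qed.

Lemma sum_n_Rmult_r (u : nat -> R) c N : sum_n u N * c = sum_n (fun n => u n * c) N.
Proof. symmetry; apply (sum_n_mult_r (K := R_Ring)). Qed.

Lemma sum_n_single (F : nat -> R) N n :
  (n <= N)%nat -> (forall m, (m <= N)%nat -> m <> n -> F m = 0) -> sum_n F N = F n.
Proof.
  induction N as [|N IH]; intros Hn HF.
  - rewrite sum_O; f_equal; lia.
  - rewrite sum_Sn; unfold plus; simpl.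
    destruct (Nat.eq_dec n (S N)) as [->|Hne].
    + rewrite (sum_n_ext_loc F (fun _ => zero)) by (intros; apply HF; lia).
      unfold sum_n; rewrite sum_n_m_const_zero; unfold zero; simpl; ring.
    + rewrite IH, (HF (S N)) by (lia || (intros; apply HF; lia)); ring.
Qed.

Section Trigonometric_basis.

Variables a b : R.

Definition trig_angle (x : R) : R := 2 * PI * (x - a) / (b - a).

Definition trig_freq (j : nat) : R := 2 * PI * INR (j + 1) / (b - a).

Lemma trig_basis_cos j x :
  trig_basis a b (2 * j + 1) x = cos (trig_freq j * (x - a)).
Proof.
  replace (2 * j + 1)%nat with (S (2 * j)) by lia.
  unfold trig_basis, trig_freq; rewrite Nat.even_even, Nat.div2_double.
  f_equal; unfold Rdiv; ring.
Qed.

Lemma trig_basis_sin j x :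
  trig_basis a b (2 * j + 2) x = sin (trig_freq j * (x - a)).
Proof.
  replace (2 * j + 2)%nat with (S (2 * j + 1)) by lia.
  unfold trig_basis, trig_freq; rewrite Nat.even_odd, Nat.div2_odd'.
  f_equal; unfold Rdiv; ring.
Qed.

(* On each index pair (2j+1, 2j+2), i.e. (cos, sin) at frequency [trig_freq j],
   d/dx acts as a rotation by a right angle scaled by [trig_freq j]. *)
Definition deriv_coef (c : nat -> R) (n : nat) : R :=
  match n with
  | O => 0
  | S m => if Nat.even m then trig_freq (Nat.div2 m) * c (S (S m))
           else - trig_freq (Nat.div2 m) * c m
  end.

Lemma deriv_coef_cos c j : deriv_coef c (2 * j + 1) = trig_freq j * c (2 * j + 2)%nat.
Proof.
  replace (2 * j + 1)%nat with (S (2 * j)) by lia.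
  unfold deriv_coef; rewrite Nat.even_even, Nat.div2_double; do 2 f_equal; lia.
Qed.

Lemma deriv_coef_sin c j : deriv_coef c (2 * j + 2) = - trig_freq j * c (2 * j + 1)%nat.
Proof.
  replace (2 * j + 2)%nat with (S (2 * j + 1)) by lia.
  unfold deriv_coef; rewrite Nat.even_odd, Nat.div2_odd'; reflexivity.
Qed.

Lemma trig_poly_S k c x :
  trig_poly (S k) a b c x =
  trig_poly k a b c x + c (2 * k + 1)%nat * cos (trig_freq k * (x - a))
                      + c (2 * k + 2)%nat * sin (trig_freq k * (x - a)).
Proof.
  unfold trig_poly at 1; rewrite sum_n_double_S, trig_basis_cos, trig_basis_sin.
  reflexivity.
Qed.

Lemma is_derive_trig_poly k c x :
  is_derive (trig_poly k a b c) x (trig_poly k a b (deriv_coef c) x).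
Proof.
  induction k as [|k IH].
  - unfold trig_poly; rewrite sum_O.
    apply is_derive_ext with (fun _ => c O * 1); [intro y; now rewrite sum_O|].
    auto_derive; [easy|]; simpl; ring.
  - rewrite (trig_poly_S k (deriv_coef c)), deriv_coef_cos, deriv_coef_sin.
    eapply is_derive_ext; [intro y; symmetry; apply trig_poly_S|].
    set (c1 := c (2 * k + 1)%nat); set (c2 := c (2 * k + 2)%nat).
    auto_derive; [eexists; exact IH|].
    erewrite is_derive_unique; [|exact IH]; unfold Rminus; ring.
Qed.

Lemma Derive_trig_poly k c x :
  Derive (trig_poly k a b c) x = trig_poly k a b (deriv_coef c) x.
Proof. exact (is_derive_unique _ _ _ (is_derive_trig_poly k c x)). Qed.

Lemma ex_derive_trig_poly k c x : ex_derive (trig_poly k a b c) x.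
Proof. eexists; apply is_derive_trig_poly. Qed.

Lemma continuous_trig_poly k c x : continuous (trig_poly k a b c) x.
Proof. apply (ex_derive_continuous (trig_poly k a b c)), ex_derive_trig_poly. Qed.

Lemma Derive_n_2_trig_poly k c x :
  Derive_n (trig_poly k a b c) 2 x = trig_poly k a b (deriv_coef (deriv_coef c)) x.
Proof.
  simpl; rewrite (Derive_ext _ _ _ (Derive_trig_poly k c)).
  apply Derive_trig_poly.
Qed.

Lemma is_derive_trig_poly_coef k (c : nat -> R -> R) (c' : nat -> R) t x :
  (forall n, (n <= 2 * k)%nat -> is_derive (c n) t (c' n)) ->
  is_derive (fun s => trig_poly k a b (fun n => c n s) x) t (trig_poly k a b c' x).
Proof.
  intros Hc; apply (is_derive_sum_n (fun n s => c n s * trig_basis a b n x)).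
  intros n Hn; exact (is_derive_scal_l (c n) t (c' n) (trig_basis a b n x) (Hc n Hn)).
Qed.

Lemma is_derive_deriv_coef k (c : nat -> R -> R) (c' : nat -> R) t :
  (forall n, (n <= 2 * k)%nat -> is_derive (c n) t (c' n)) ->
  forall n, (n <= 2 * k)%nat ->
  is_derive (fun s => deriv_coef (fun m => c m s) n) t (deriv_coef c' n).
Proof.
  intros Hc [|m] Hm; simpl.
  - apply (is_derive_const (V := R_NormedModule) 0).
  - destruct (Nat.even m) eqn:Em; apply is_derive_scal, Hc; [|lia].
    (* an index [S m] with [m] even is odd, hence [S m < 2 * k] *)
    apply Nat.even_spec in Em as [j ->]; lia.
Qed.

Definition basis_harmonic (n : nat) : nat :=
  match n with O => O | S m => S (Nat.div2 m) end.

Definition basis_phase (n : nat) : R :=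
  match n with O => 0 | S m => if Nat.even m then 0 else - (PI / 2) end.

Lemma trig_basis_phase_form n x :
  trig_basis a b n x = cos (INR (basis_harmonic n) * trig_angle x + basis_phase n).
Proof.
  destruct n as [|m]; unfold trig_basis, basis_harmonic, basis_phase, trig_angle.
  - now rewrite Rmult_0_l, Rplus_0_r, cos_0.
  - cbv zeta; rewrite Nat.add_1_r.
    replace (2 * PI * INR (S (Nat.div2 m)) * (x - a) / (b - a))
      with (INR (S (Nat.div2 m)) * (2 * PI * (x - a) / (b - a))) by (unfold Rdiv; ring).
    destruct (Nat.even m).
    + now rewrite Rplus_0_r.
    + rewrite cos_plus, cos_neg, sin_neg, cos_PI2, sin_PI2; ring.
Qed.

Lemma is_derive_trig_angle x : is_derive trig_angle x (2 * PI / (b - a)).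
Proof. unfold trig_angle; auto_derive; [easy | unfold Rdiv; ring]. Qed.

Lemma continuous_cos_harmonic r phi x :
  continuous (fun y => cos (r * trig_angle y + phi)) x.
Proof.
  apply (ex_derive_continuous (fun y => cos (r * trig_angle y + phi))).
  auto_derive; eexists; apply is_derive_trig_angle.
Qed.

Lemma continuous_trig_basis n x : continuous (trig_basis a b n) x.
Proof.
  apply (continuous_ext (fun y => cos (INR (basis_harmonic n) * trig_angle y + basis_phase n))).
  - intros y; symmetry; apply trig_basis_phase_form.
  - apply continuous_cos_harmonic.
Qed.

End Trigonometric_basis.

Lemma cos_mul_cos x y : cos x * cos y = / 2 * (cos (x - y) + cos (x + y)).
Proof. rewrite cos_minus, cos_plus; field. Qed.

Section Integration.

Variables a b : R.

Lemma RInt_const_R (c : R) : RInt (fun _ => c) a b = (b - a) * c.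
Proof. exact (RInt_const a b c). Qed.

Lemma ex_RInt_of_continuous (f : R -> R) :
  (forall x, continuous f x) -> ex_RInt f a b.
Proof. intros Hf; apply (ex_RInt_continuous (V := R_CompleteNormedModule)); auto. Qed.

Lemma RInt_plus_of_continuous (f g : R -> R) :
  (forall x, continuous f x) -> (forall x, continuous g x) ->
  RInt (fun x => f x + g x) a b = RInt f a b + RInt g a b.
Proof. intros; apply (RInt_plus (V := R_CompleteNormedModule)); apply ex_RInt_of_continuous; auto. Qed.

Lemma RInt_scal_of_continuous (c : R) (f : R -> R) :
  (forall x, continuous f x) -> RInt (fun x => c * f x) a b = c * RInt f a b.
Proof. intros; apply (RInt_scal (V := R_CompleteNormedModule)); apply ex_RInt_of_continuous; auto. Qed.

Lemma is_RInt_sum_n (F : nat -> R -> R) N :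
  (forall n, (n <= N)%nat -> ex_RInt (F n) a b) ->
  is_RInt (fun x => sum_n (fun n => F n x) N) a b (sum_n (fun n => RInt (F n) a b) N).
Proof.
  induction N as [|N IH]; intros HF.
  - apply (is_RInt_ext (F O)); [intros; symmetry; apply (sum_O (fun n => F n x))|].
    rewrite sum_O; apply (RInt_correct (V := R_CompleteNormedModule)), HF; lia.
  - apply (is_RInt_ext (fun x => sum_n (fun n => F n x) N + F (S N) x));
      [intros; symmetry; apply (sum_Sn (fun n => F n x))|].
    rewrite sum_Sn; apply (is_RInt_plus (V := R_NormedModule)).
    + apply IH; intros; apply HF; lia.
    + apply (RInt_correct (V := R_CompleteNormedModule)), HF; lia.
Qed.

Lemma RInt_sum_n_of_continuous (F : nat -> R -> R) N :
  (forall n x, continuous (F n) x) ->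
  RInt (fun x => sum_n (fun n => F n x) N) a b = sum_n (fun n => RInt (F n) a b) N.
Proof.
  intros HF; apply is_RInt_unique, is_RInt_sum_n.
  intros n _; apply ex_RInt_of_continuous, HF.
Qed.

Lemma RInt_derive_periodic (G g : R -> R) :
  (forall x, is_derive G x (g x)) -> (forall x, continuous g x) -> G b = G a ->
  RInt g a b = 0.
Proof.
  intros HG Hg Hper; apply is_RInt_unique.
  replace 0 with (minus (G b) (G a)) by (rewrite Hper; apply (minus_eq_zero (G := R_AbelianGroup))).
  apply (is_RInt_derive G g); auto.
Qed.

End Integration.

(** * Orthogonality and the L² projection *)

Section Orthogonality.

Variables a b : R.
Hypothesis Hab : a < b.

Lemma harmonic_angle_periodic (m : nat) phi :
  INR m * trig_angle a b b + phi = (INR m * trig_angle a b a + phi) + 2 * INR m * PI.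
Proof. unfold trig_angle; field; lra. Qed.

Lemma trig_poly_periodic k c : trig_poly k a b c b = trig_poly k a b c a.
Proof.
  apply sum_n_ext; intro n.
  now rewrite !trig_basis_phase_form, harmonic_angle_periodic, cos_period.
Qed.

Lemma RInt_cos_harmonic (m : nat) phi :
  (0 < m)%nat -> RInt (fun x => cos (INR m * trig_angle a b x + phi)) a b = 0.
Proof.
  intros Hm.
  assert (Hmr : INR m <> 0) by (apply not_0_INR; lia).
  pose proof PI_RGT_0.
  set (F x := sin (INR m * trig_angle a b x + phi) / (INR m * (2 * PI / (b - a)))).
  apply is_RInt_unique.
  replace 0 with (minus (F b) (F a)).
  - apply (is_RInt_derive F).
    + intros x _; unfold F; auto_derive; [eexists; apply is_derive_trig_angle|].
      erewrite is_derive_unique; [|apply is_derive_trig_angle].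
      field; repeat split; lra.
    + intros x _; apply continuous_cos_harmonic.
  - unfold F; rewrite harmonic_angle_periodic, sin_period.
    unfold minus, plus, opp; simpl; ring.
Qed.

Lemma RInt_cos_harmonic_diff (p q : nat) phi :
  p <> q -> RInt (fun x => cos ((INR p - INR q) * trig_angle a b x + phi)) a b = 0.
Proof.
  intros Hpq; destruct (Nat.lt_ge_cases q p).
  - rewrite <- minus_INR by lia; apply RInt_cos_harmonic; lia.
  - rewrite (RInt_ext _ (fun x => cos (INR (q - p) * trig_angle a b x + - phi))).
    + apply RInt_cos_harmonic; lia.
    + intros x _; rewrite minus_INR, <- cos_neg by lia; f_equal; ring.
Qed.

Lemma RInt_trig_basis_mul n m :
  RInt (fun x => trig_basis a b n x * trig_basis a b m x) a b =
  / 2 * (RInt (fun x => cos ((INR (basis_harmonic n) - INR (basis_harmonic m))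
                              * trig_angle a b x + (basis_phase n - basis_phase m))) a b
         + RInt (fun x => cos (INR (basis_harmonic n + basis_harmonic m)
                              * trig_angle a b x + (basis_phase n + basis_phase m))) a b).
Proof.
  rewrite <- RInt_plus_of_continuous, <- RInt_scal_of_continuous
    by (intros; try apply (continuous_plus (V := R_NormedModule)); apply continuous_cos_harmonic).
  apply RInt_ext; intros x _.
  rewrite !trig_basis_phase_form, cos_mul_cos, plus_INR.
  f_equal; f_equal; f_equal; ring.
Qed.

Lemma phase_cos_diff_same_harmonic n m :
  n <> m -> basis_harmonic n = basis_harmonic m -> cos (basis_phase n - basis_phase m) = 0.
Proof.
  destruct n as [|n], m as [|m]; try easy; simpl; intros Hnm Hh.
  assert (Hpar : Nat.even n <> Nat.even m).
  { intros He; apply Hnm; f_equal.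
    rewrite (Nat.div2_odd n), (Nat.div2_odd m), <- !Nat.negb_even, He; congruence. }
  destruct (Nat.even n), (Nat.even m); try easy.
  - rewrite Rminus_0_l, Ropp_involutive; apply cos_PI2.
  - rewrite Rminus_0_r, cos_neg; apply cos_PI2.
Qed.

Lemma trig_basis_orthogonal n m :
  n <> m -> RInt (fun x => trig_basis a b n x * trig_basis a b m x) a b = 0.
Proof.
  intros Hnm; rewrite RInt_trig_basis_mul, RInt_cos_harmonic.
  2:{ destruct n, m; simpl; [now contradiction Hnm|..]; apply Nat.lt_0_succ. }
  destruct (Nat.eq_dec (basis_harmonic n) (basis_harmonic m)) as [Hh|Hh].
  - rewrite (RInt_ext _ (fun _ => 0)), RInt_const_R; [R_eq; ring|].
    intros x _; rewrite Hh, Rminus_diag, Rmult_0_l, Rplus_0_l.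
    now apply phase_cos_diff_same_harmonic.
  - rewrite RInt_cos_harmonic_diff by exact Hh.
    R_eq; ring.
Qed.

Lemma RInt_trig_basis_sqr_pos n : 0 < RInt (fun x => trig_basis a b n x ^ 2) a b.
Proof.
  rewrite (RInt_ext _ (fun x => trig_basis a b n x * trig_basis a b n x)) by (intros; R_eq; ring).
  rewrite RInt_trig_basis_mul, (RInt_ext _ (fun _ => 1)), RInt_const_R.
  2:{ intros x _; rewrite !Rminus_diag, Rmult_0_l, Rplus_0_l; apply cos_0. }
  destruct n as [|n].
  - rewrite (RInt_ext _ (fun _ => 1)), RInt_const_R; [lra|].
    intros x _; simpl; rewrite Rmult_0_l, !Rplus_0_l; apply cos_0.
  - rewrite RInt_cos_harmonic by (simpl; apply Nat.lt_0_succ).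
    lra.
Qed.

End Orthogonality.

Section Projection.

Variables (a b : R) (k : nat).
Hypothesis Hab : a < b.

Lemma continuous_trig_basis_mul n (g : R -> R) x :
  continuous g x -> continuous (fun y => trig_basis a b n y * g y) x.
Proof. apply (continuous_mult (trig_basis a b n) g), continuous_trig_basis. Qed.

Lemma RInt_trig_poly_mul c (g : R -> R) : (forall x, continuous g x) ->
  RInt (fun x => trig_poly k a b c x * g x) a b =
  sum_n (fun n => c n * RInt (fun x => trig_basis a b n x * g x) a b) (2 * k).
Proof.
  intros Hg.
  rewrite (RInt_ext _ (fun x => sum_n (fun n => c n * (trig_basis a b n x * g x)) (2 * k))).
  - rewrite RInt_sum_n_of_continuous.
    + apply sum_n_ext; intros n; apply RInt_scal_of_continuous.
      intros; apply continuous_trig_basis_mul, Hg.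
    + intros n x; apply (continuous_mult (fun _ => c n)); [apply continuous_const|].
      apply continuous_trig_basis_mul, Hg.
  - intros x _; unfold trig_poly; rewrite sum_n_Rmult_r.
    apply sum_n_ext; intros; R_eq; ring.
Qed.

Lemma RInt_trig_basis_mul_L2proj n (f : R -> R) : (n <= 2 * k)%nat ->
  (forall x, continuous f x) ->
  RInt (fun x => trig_basis a b n x * L2proj k a b f x) a b =
  RInt (fun x => trig_basis a b n x * f x) a b.
Proof.
  intros Hn Hf; unfold L2proj.
  rewrite (RInt_ext _ (fun x => trig_poly k a b _ x * trig_basis a b n x))
    by (intros; R_eq; ring).
  rewrite RInt_trig_poly_mul by (apply continuous_trig_basis).
  rewrite (sum_n_single _ _ n Hn).
  - pose proof (RInt_trig_basis_sqr_pos a b Hab n).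
    rewrite (RInt_ext (fun x => trig_basis a b n x * trig_basis a b n x)
                      (fun x => trig_basis a b n x ^ 2)) by (intros; R_eq; ring).
    rewrite (RInt_ext (fun x => trig_basis a b n x * f x)
                      (fun x => f x * trig_basis a b n x)) by (intros; R_eq; ring).
    R_eq; field; lra.
  - intros m _ Hmn; rewrite (trig_basis_orthogonal a b Hab m n Hmn); R_eq; ring.
Qed.

Lemma continuous_trig_poly_mul c (g : R -> R) x :
  continuous g x -> continuous (fun y => trig_poly k a b c y * g y) x.
Proof. apply (continuous_mult (trig_poly k a b c) g), continuous_trig_poly. Qed.

Lemma continuous_L2proj f x : continuous (L2proj k a b f) x.
Proof. apply continuous_trig_poly. Qed.

Lemma RInt_trig_poly_mul_L2proj c (f : R -> R) : (forall x, continuous f x) ->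
  RInt (fun x => trig_poly k a b c x * L2proj k a b f x) a b =
  RInt (fun x => trig_poly k a b c x * f x) a b.
Proof.
  intros Hf; rewrite !RInt_trig_poly_mul by
    (try intros; try apply Hf; apply continuous_trig_poly).
  apply sum_n_ext_loc; intros n Hn; f_equal.
  apply RInt_trig_basis_mul_L2proj; assumption.
Qed.

End Projection.

(** * Differentiation under the integral sign *)

Section Separable.

Variable t : R.

Local Notation sep_list := (list ((R -> R) * (R -> R))%type).

(* A list of pairs (g_i, h_i) represents F s x = Σ g_i(s) h_i(x). When the g_i are
   differentiable at t and the h_i continuous, ∫ F s = Σ g_i(s) ∫ h_i, so d/ds
   commutes with the integral in x. *)
Definition sep_eval (l : sep_list) (s x : R) : R :=
  fold_right (fun p acc => fst p s * snd p x + acc) 0 l.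

Definition sep_derive (l : sep_list) : sep_list :=
  map (fun p => (Derive (fst p), snd p)) l.

Definition sep_derivable (l : sep_list) : Prop :=
  List.Forall (fun p => ex_derive (fst p) t) l.

Definition sep_continuous (l : sep_list) : Prop :=
  List.Forall (fun p => forall x, continuous (snd p) x) l.

Lemma sep_continuous_derive l : sep_continuous l -> sep_continuous (sep_derive l).
Proof. intros Hl; apply Forall_map; exact Hl. Qed.

Lemma is_derive_sep_eval l x :
  sep_derivable l -> is_derive (fun s => sep_eval l s x) t (sep_eval (sep_derive l) t x).
Proof.
  induction 1 as [|p l Hp _ IH]; simpl.
  - apply (is_derive_const (V := R_NormedModule) 0).
  - apply (is_derive_plus (fun s => fst p s * snd p x)); [|exact IH].
    apply (is_derive_scal_l (V := R_NormedModule) (fst p)), Derive_correct, Hp.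
Qed.

Lemma continuous_sep_eval l s x : sep_continuous l -> continuous (sep_eval l s) x.
Proof.
  induction 1 as [|p l Hp _ IH]; simpl.
  - apply continuous_const.
  - apply (continuous_plus (fun y => fst p s * snd p y)); [|exact IH].
    apply (continuous_mult (fun _ => fst p s)); [apply continuous_const | apply Hp].
Qed.

Lemma RInt_sep_eval_cons a b p l s : sep_continuous (p :: l) ->
  RInt (sep_eval (p :: l) s) a b = fst p s * RInt (snd p) a b + RInt (sep_eval l s) a b.
Proof.
  intros Hl; inversion Hl as [|? ? Hp Hl']; subst.
  change (sep_eval (p :: l) s) with (fun x => fst p s * snd p x + sep_eval l s x).
  rewrite RInt_plus_of_continuous, RInt_scal_of_continuous; auto.
  - intros; apply (continuous_mult (fun _ => fst p s)); [apply continuous_const | apply Hp].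
  - intros; apply continuous_sep_eval, Hl'.
Qed.

Lemma is_derive_RInt_sep_eval a b l : sep_derivable l -> sep_continuous l ->
  is_derive (fun s => RInt (sep_eval l s) a b) t (RInt (sep_eval (sep_derive l) t) a b).
Proof.
  intros Hd Hc; induction Hd as [|p l Hp Hd IH].
  - change (is_derive (fun _ => RInt (fun _ => 0) a b) t (RInt (fun _ => 0) a b)).
    rewrite RInt_const_R, Rmult_0_r; apply (is_derive_const (V := R_NormedModule)).
  - apply (is_derive_ext (fun s => fst p s * RInt (snd p) a b + RInt (sep_eval l s) a b));
      [intros; symmetry; now apply RInt_sep_eval_cons|].
    change (sep_derive (p :: l)) with ((Derive (fst p), snd p) :: sep_derive l).
    rewrite RInt_sep_eval_cons by (apply (sep_continuous_derive (p :: l)), Hc).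
    apply (is_derive_plus (fun s => fst p s * RInt (snd p) a b)).
    + apply (is_derive_scal_l (V := R_NormedModule) (fst p)), Derive_correct, Hp.
    + apply IH; inversion Hc; assumption.
Qed.

Lemma sep_eval_app l1 l2 s x : sep_eval (l1 ++ l2) s x = sep_eval l1 s x + sep_eval l2 s x.
Proof. induction l1 as [|p l1 IH]; simpl; [ring | rewrite IH; ring]. Qed.

Definition sep_mul (l1 l2 : sep_list) : sep_list :=
  flat_map (fun p => map (fun q => (fun s => fst p s * fst q s, fun x => snd p x * snd q x)) l2) l1.

Lemma sep_eval_mul l1 l2 s x : sep_eval (sep_mul l1 l2) s x = sep_eval l1 s x * sep_eval l2 s x.
Proof.
  induction l1 as [|p l1 IH]; simpl; [R_eq; ring|].
  rewrite sep_eval_app, IH, Rmult_plus_distr_r; f_equal.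
  clear IH; induction l2 as [|q l2 IH2]; simpl; R_eq; [ring | rewrite IH2; ring].
Qed.

Lemma sep_derivable_mul l1 l2 : sep_derivable l1 -> sep_derivable l2 -> sep_derivable (sep_mul l1 l2).
Proof.
  intros H1 H2; apply Forall_flat_map; eapply Forall_impl; [|exact H1]; intros p Hp.
  apply Forall_map; eapply Forall_impl; [|exact H2]; intros q Hq; simpl.
  apply (ex_derive_mult (fst p) (fst q)); assumption.
Qed.

Lemma sep_continuous_mul l1 l2 : sep_continuous l1 -> sep_continuous l2 -> sep_continuous (sep_mul l1 l2).
Proof.
  intros H1 H2; apply Forall_flat_map; eapply Forall_impl; [|exact H1]; intros p Hp.
  apply Forall_map; eapply Forall_impl; [|exact H2]; intros q Hq x; simpl.
  apply (continuous_mult (snd p) (snd q)); auto.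
Qed.

End Separable.

Definition separable (t : R) (F : R -> R -> R) : Prop :=
  exists l, sep_derivable t l /\ sep_continuous l /\ forall s x, F s x = sep_eval l s x.

Lemma is_derive_RInt_separable a b t (F : R -> R -> R) : separable t F ->
  is_derive (fun s => RInt (F s) a b) t (RInt (fun x => Derive (fun s => F s x) t) a b).
Proof.
  intros (l & Hd & Hc & HF).
  apply (is_derive_ext (fun s => RInt (sep_eval l s) a b)).
  { intros s; apply RInt_ext; intros; symmetry; apply HF. }
  rewrite (RInt_ext _ (sep_eval (sep_derive l) t)).
  - now apply is_derive_RInt_sep_eval.
  - intros x _; rewrite (Derive_ext _ (fun s => sep_eval l s x)) by (intros; apply HF).
    apply is_derive_unique, is_derive_sep_eval, Hd.
Qed.

Section Separable_closure.

Variable t : R.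

Lemma separable_ext (F G : R -> R -> R) :
  separable t F -> (forall s x, G s x = F s x) -> separable t G.
Proof.
  intros (l & Hd & Hc & HF) HG; exists l; repeat split; auto.
  intros; rewrite HG; apply HF.
Qed.

Lemma separable_time (g : R -> R) : ex_derive g t -> separable t (fun s _ => g s).
Proof.
  intros Hg; exists ((g, fun _ => 1) :: nil); repeat constructor; auto.
  - intros; apply continuous_const.
  - intros; simpl; ring.
Qed.

Lemma separable_space (h : R -> R) : (forall x, continuous h x) -> separable t (fun _ x => h x).
Proof.
  intros Hh; exists ((fun _ => 1, h) :: nil); repeat constructor; auto.
  - apply ex_derive_const.
  - intros; simpl; ring.
Qed.

Lemma separable_plus (F G : R -> R -> R) :
  separable t F -> separable t G -> separable t (fun s x => F s x + G s x).
Proof.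
  intros (l1 & Hd1 & Hc1 & HF) (l2 & Hd2 & Hc2 & HG).
  exists (l1 ++ l2); repeat split; try (apply Forall_app; split; assumption).
  intros; rewrite sep_eval_app, HF, HG; reflexivity.
Qed.

Lemma separable_mult (F G : R -> R -> R) :
  separable t F -> separable t G -> separable t (fun s x => F s x * G s x).
Proof.
  intros (l1 & Hd1 & Hc1 & HF) (l2 & Hd2 & Hc2 & HG).
  exists (sep_mul l1 l2); repeat split.
  - now apply sep_derivable_mul.
  - now apply sep_continuous_mul.
  - intros; rewrite sep_eval_mul, HF, HG; reflexivity.
Qed.

Lemma separable_const (c : R) : separable t (fun _ _ => c).
Proof. apply separable_time, ex_derive_const. Qed.

Lemma separable_minus (F G : R -> R -> R) :
  separable t F -> separable t G -> separable t (fun s x => F s x - G s x).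
Proof.
  intros HF HG; apply (separable_ext (fun s x => F s x + (-1) * G s x)); [|intros; ring].
  apply separable_plus, separable_mult; auto using separable_const.
Qed.

Lemma separable_pow2 (F : R -> R -> R) : separable t F -> separable t (fun s x => F s x ^ 2).
Proof.
  intros HF; apply (separable_ext (fun s x => F s x * F s x)); [|intros; ring].
  now apply separable_mult.
Qed.

Lemma separable_sum_n (F : nat -> R -> R -> R) N :
  (forall n, (n <= N)%nat -> separable t (F n)) ->
  separable t (fun s x => sum_n (fun n => F n s x) N).
Proof.
  induction N as [|N IH]; intros HF.
  - apply (separable_ext (F O)); [apply HF; lia | intros; apply (sum_O (fun n => F n s x))].
  - apply (separable_ext (fun s x => sum_n (fun n => F n s x) N + F (S N) s x)).
    + apply separable_plus; [apply IH; intros; apply HF; lia | apply HF; lia].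
    + intros; apply (sum_Sn (fun n => F n s x)).
Qed.

Lemma separable_trig_poly k a b (c : nat -> R -> R) :
  (forall n, (n <= 2 * k)%nat -> ex_derive (c n) t) ->
  separable t (fun s x => trig_poly k a b (fun n => c n s) x).
Proof.
  intros Hc; apply separable_sum_n; intros n Hn.
  apply separable_mult; [now apply separable_time, Hc|].
  apply separable_space, continuous_trig_basis.
Qed.

End Separable_closure.

Section Trigonometric_fields.

Variables (k : nat) (a b : R).

(* Naming the time-dependent polynomial lets [auto_derive] treat [trig_field c s x]
   as an opaque function of [s] or of [x]. *)
Definition trig_field (c : nat -> R -> R) (s x : R) : R := trig_poly k a b (fun n => c n s) x.

Definition deriv_field (c : nat -> R -> R) (n : nat) (s : R) : R :=
  deriv_coef a b (fun m => c m s) n.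

(* Constant in time, so that [trig_field (coef_derive c t) t] is the time derivative
   of [trig_field c] at [t]. *)
Definition coef_derive (c : nat -> R -> R) (t : R) (n : nat) (_ : R) : R := Derive (c n) t.

Lemma ex_derive_trig_field c s x : ex_derive (fun y => trig_field c s y) x.
Proof. apply ex_derive_trig_poly. Qed.

Lemma Derive_trig_field c s x :
  Derive (fun y => trig_field c s y) x = trig_field (deriv_field c) s x.
Proof. apply Derive_trig_poly. Qed.

Lemma Derive_n_2_trig_field c s x :
  Derive_n (trig_field c s) 2 x = trig_field (deriv_field (deriv_field c)) s x.
Proof. apply Derive_n_2_trig_poly. Qed.

Lemma trig_field_periodic c s : a < b -> trig_field c s b = trig_field c s a.
Proof. intros Hab; apply trig_poly_periodic, Hab. Qed.

Variable t : R.

Definition derivable_coefs (c : nat -> R -> R) : Prop :=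
  forall n, (n <= 2 * k)%nat -> ex_derive (c n) t.

Lemma derivable_deriv_field c : derivable_coefs c -> derivable_coefs (deriv_field c).
Proof.
  intros Hc n Hn; eexists.
  apply (is_derive_deriv_coef a b k c (fun m => Derive (c m) t)); [|exact Hn].
  intros m Hm; apply Derive_correct, Hc, Hm.
Qed.

Lemma Derive_trig_field_time c x : derivable_coefs c ->
  Derive (fun s => trig_field c s x) t = trig_field (coef_derive c t) t x.
Proof.
  intros Hc; apply is_derive_unique, is_derive_trig_poly_coef.
  intros n Hn; apply Derive_correct, Hc, Hn.
Qed.

Lemma ex_derive_trig_field_time c x : derivable_coefs c -> ex_derive (fun s => trig_field c s x) t.
Proof.
  intros Hc; eexists; apply is_derive_trig_poly_coef.
  intros n Hn; apply Derive_correct, Hc, Hn.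
Qed.

Lemma Derive_deriv_field_time c x : derivable_coefs c ->
  Derive (fun s => trig_field (deriv_field c) s x) t =
  trig_field (deriv_field (coef_derive c t)) t x.
Proof.
  intros Hc; apply is_derive_unique, is_derive_trig_poly_coef.
  apply (is_derive_deriv_coef a b k c (fun m => Derive (c m) t)).
  intros n Hn; apply Derive_correct, Hc, Hn.
Qed.

Lemma separable_trig_field c : derivable_coefs c -> separable t (trig_field c).
Proof. apply separable_trig_poly. Qed.

End Trigonometric_fields.

(** * Conservation laws *)

Section Conservation.

Variables (a b : R) (k : nat).
Hypothesis Hab : a < b.

Definition proj_defect (u : nat -> R) (f : R -> R) (x : R) : R :=
  trig_poly k a b u x * (L2proj k a b f x - f x).

Lemma continuous_proj_defect u f x : continuous f x -> continuous (proj_defect u f) x.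
Proof.
  intros Hf; apply continuous_trig_poly_mul.
  apply (continuous_minus (L2proj k a b f)); [apply continuous_L2proj | exact Hf].
Qed.

Lemma RInt_proj_defect u f : (forall x, continuous f x) -> RInt (proj_defect u f) a b = 0.
Proof.
  intros Hf; unfold proj_defect.
  rewrite (RInt_ext _ (fun x => trig_poly k a b u x * L2proj k a b f x
                                + (-1) * (trig_poly k a b u x * f x))) by (intros; R_eq; ring).
  rewrite RInt_plus_of_continuous, RInt_scal_of_continuous, RInt_trig_poly_mul_L2proj.
  - R_eq; ring.
  - exact Hab.
  - exact Hf.
  - intros; apply continuous_trig_poly_mul, Hf.
  - intros; apply continuous_trig_poly_mul, continuous_L2proj.
  - intros; apply (continuous_mult (fun _ => -1)); [apply continuous_const|].
    apply continuous_trig_poly_mul, Hf.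
Qed.

Lemma is_derive_zero_of_flux_form t (Q : R -> R) (q : R -> R -> R) (G g : R -> R)
    (u1 u2 : nat -> R) (f1 f2 : R -> R) c1 c2 :
  (forall s, Q s = RInt (q s) a b) -> separable t q ->
  (forall x, is_derive G x (g x)) ->
  (forall x, a < x < b ->
     Derive (fun s => q s x) t = g x + c1 * proj_defect u1 f1 x + c2 * proj_defect u2 f2 x) ->
  G b = G a -> (forall x, continuous g x) ->
  (forall x, continuous f1 x) -> (forall x, continuous f2 x) ->
  is_derive Q t 0.
Proof.
  intros HQ Hq HG Hflux Hper Hg Hf1 Hf2.
  apply (is_derive_ext (fun s => RInt (q s) a b)); [intros; symmetry; apply HQ|].
  replace 0 with (RInt (fun x => g x + c1 * proj_defect u1 f1 x + c2 * proj_defect u2 f2 x) a b).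
  - rewrite <- (RInt_ext (fun x => Derive (fun s => q s x) t))
      by (intros x Hx; rewrite Rmin_left, Rmax_right in Hx by lra; apply Hflux, Hx).
    now apply is_derive_RInt_separable.
  - assert (Hd : forall c u f, (forall x, continuous f x) ->
                   forall x, continuous (fun y => c * proj_defect u f y) x).
    { intros c u f Hf x; apply (continuous_mult (fun _ => c)); [apply continuous_const|].
      apply continuous_proj_defect, Hf. }
    rewrite !RInt_plus_of_continuous, !RInt_scal_of_continuous, !RInt_proj_defect,
      (RInt_derive_periodic a b G g); auto.
    + R_eq; ring.
    + intros; apply continuous_proj_defect; auto.
    + intros; apply continuous_proj_defect; auto.
    + intros; apply (continuous_plus g); auto.
Qed.

End Conservation.

Ltac separable_field :=
  repeat match goal with
  | |- separable _ (fun s x => @?F s x + @?G s x) => apply (separable_plus _ F G)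
  | |- separable _ (fun s x => @?F s x - @?G s x) => apply (separable_minus _ F G)
  | |- separable _ (fun s x => @?F s x * @?G s x) => apply (separable_mult _ F G)
  | |- separable _ (fun s x => @?F s x ^ 2) => apply (separable_pow2 _ F)
  | |- separable _ (fun _ _ => _) => apply separable_const
  | |- separable _ (fun s x => trig_field _ _ _ _ s x) =>
      apply separable_trig_field; auto using derivable_deriv_field
  end.

Ltac smooth_field :=
  apply (@ex_derive_continuous R_AbsRing R_NormedModule);
  auto_derive; repeat split; apply ex_derive_trig_field.

Section Galerkin_NLS.

Variables (a b beta : R) (k : nat) (cv cw : nat -> R -> R) (t : R).
Hypothesis Hab : a < b.
Hypothesis cv_derivable : derivable_coefs k t cv.
Hypothesis cw_derivable : derivable_coefs k t cw.

Local Notation v := (trig_field k a b cv).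
Local Notation w := (trig_field k a b cw).
Local Notation D := (deriv_field a b).
Local Notation Nv := (fun y => (v t y ^ 2 + w t y ^ 2) * v t y).
Local Notation Nw := (fun y => (v t y ^ 2 + w t y ^ 2) * w t y).

Hypothesis galerkin : forall x, a <= x < b ->
  Derive (fun s => v s x) t = - Derive_n (w t) 2 x - beta * L2proj k a b Nw x /\
  Derive (fun s => w s x) t = Derive_n (v t) 2 x + beta * L2proj k a b Nv x.

Lemma galerkin_fields x : a < x < b ->
  trig_field k a b (coef_derive cv t) t x
    = - trig_field k a b (D (D cw)) t x - beta * L2proj k a b Nw x /\
  trig_field k a b (coef_derive cw t) t x
    = trig_field k a b (D (D cv)) t x + beta * L2proj k a b Nv x.
Proof.
  intros Hx; rewrite <- !Derive_trig_field_time, <- !Derive_n_2_trig_field by assumption.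
  apply galerkin; lra.
Qed.

Local Notation vx := (trig_field k a b (D cv) t).
Local Notation wx := (trig_field k a b (D cw) t).
Local Notation vxx := (trig_field k a b (D (D cv)) t).
Local Notation wxx := (trig_field k a b (D (D cw)) t).
Local Notation vt := (trig_field k a b (coef_derive cv t) t).
Local Notation wt := (trig_field k a b (coef_derive cw t) t).
Local Notation vtx := (trig_field k a b (D (coef_derive cv t)) t).
Local Notation wtx := (trig_field k a b (D (coef_derive cw t)) t).

Ltac galerkin_time_derivative x Hx :=
  let Ev := fresh "Ev" in
  let Ew := fresh "Ew" in
  destruct (galerkin_fields x Hx) as [Ev Ew];
  erewrite is_derive_unique by
    (auto_derive; [repeat split; apply ex_derive_trig_field_time;
                   auto using derivable_deriv_field | reflexivity]);
  rewrite ?Derive_deriv_field_time, !Derive_trig_field_time by assumption;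
  unfold proj_defect; fold (v t x) (w t x) (vx x) (wx x) (vt x) (wt x);
  rewrite Ev, Ew.

Ltac flux_derivative :=
  auto_derive; [repeat split; apply ex_derive_trig_field|];
  rewrite !Derive_trig_field.

Lemma mass_rate : is_derive (fun s => mass a b (v s) (w s)) t 0.
Proof.
  apply (is_derive_zero_of_flux_form a b k Hab t _ (fun s x => v s x ^ 2 + w s x ^ 2)
           (fun x => 2 * (w t x * vx x - v t x * wx x))
           (fun x => 2 * (w t x * vxx x - v t x * wxx x))
           (fun n => cw n t) (fun n => cv n t) Nv Nw (2 * beta) (- 2 * beta));
    [reflexivity | separable_field | | |
     now rewrite !trig_field_periodic | intros x; smooth_field ..].
  - intros x; flux_derivative; ring.
  - intros x Hx; galerkin_time_derivative x Hx; ring.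
Qed.

Lemma momentum_rate : is_derive (fun s => momentum a b (v s) (w s)) t 0.
Proof.
  apply (is_derive_zero_of_flux_form a b k Hab t _
           (fun s x => v s x * trig_field k a b (D cw) s x - w s x * trig_field k a b (D cv) s x)
           (fun x => v t x * wt x - w t x * vt x - vx x ^ 2 - wx x ^ 2
                     - beta / 2 * (v t x ^ 2 + w t x ^ 2) ^ 2)
           (fun x => vx x * wt x + v t x * wtx x - wx x * vt x - w t x * vtx x
                     - 2 * vx x * vxx x - 2 * wx x * wxx x
                     - beta * (v t x ^ 2 + w t x ^ 2) * (2 * v t x * vx x + 2 * w t x * wx x))
           (fun n => D cw n t) (fun n => D cv n t) Nw Nv (- 2 * beta) (- 2 * beta));
    [| separable_field | | |
     now rewrite !trig_field_periodic | intros x; smooth_field ..].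
  - intros s; apply RInt_ext; intros x _; now rewrite !Derive_trig_field.
  - intros x; flux_derivative; field.
  - intros x Hx; galerkin_time_derivative x Hx; field.
Qed.

Lemma energy_rate : is_derive (fun s => energy a b beta (v s) (w s)) t 0.
Proof.
  apply (is_derive_zero_of_flux_form a b k Hab t _
           (fun s x => trig_field k a b (D cv) s x ^ 2 + trig_field k a b (D cw) s x ^ 2
                       - beta / 2 * (v s x ^ 2 + w s x ^ 2) ^ 2)
           (fun x => 2 * (vx x * vt x + wx x * wt x))
           (fun x => 2 * (vxx x * vt x + vx x * vtx x + wxx x * wt x + wx x * wtx x))
           (fun n => coef_derive cv t n t) (fun n => coef_derive cw t n t) Nv Nw
           (2 * beta) (2 * beta));
    [| separable_field | | |
     now rewrite !trig_field_periodic | intros x; smooth_field ..].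
  - intros s; apply RInt_ext; intros x _; now rewrite !Derive_trig_field.
  - intros x; flux_derivative; ring.
  - intros x Hx; galerkin_time_derivative x Hx; field.
Qed.

End Galerkin_NLS.

Lemma eq_on_open_interval_of_is_derive_0 (F : R -> R) (lo hi : Rbar) :
  (forall t, in_open_interval lo hi t -> is_derive F t 0) ->
  forall t1 t2, in_open_interval lo hi t1 -> in_open_interval lo hi t2 -> F t1 = F t2.
Proof.
  intros HF.
  assert (Hlt : forall t1 t2, t1 < t2 -> in_open_interval lo hi t1 ->
                in_open_interval lo hi t2 -> F t1 = F t2).
  { intros t1 t2 Ht [Hlo1 _] [_ Hhi2]; apply (eq_is_derive F); [|exact Ht].
    intros s Hs; apply HF; split.
    - apply (Rbar_lt_le_trans _ t1); [exact Hlo1 | simpl; lra].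
    - apply (Rbar_le_lt_trans _ t2); [simpl; lra | exact Hhi2]. }
  intros t1 t2 H1 H2; destruct (Rtotal_order t1 t2) as [Ht|[->|Ht]]; auto.
  symmetry; auto.
Qed.

Theorem theorem2p3 (a b beta : R) (k : nat) (lo hi : Rbar)
  (cv cw : nat -> R -> R) :
  a < b ->
  (* (v,w) : I -> T_k x T_k is C^1: its coefficients are C^1 on I *)
  (forall n t, (n <= 2 * k)%nat -> in_open_interval lo hi t ->
     ex_derive (cv n) t /\ continuous (Derive (cv n)) t /\
     ex_derive (cw n) t /\ continuous (Derive (cw n)) t) ->
  let v := fun t x => trig_poly k a b (fun n => cv n t) x in
  let w := fun t x => trig_poly k a b (fun n => cw n t) x in
  (* Fourier Galerkin semidiscretization of NLS *)
  (forall t x, in_open_interval lo hi t -> a <= x < b ->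
     Derive (fun s => v s x) t =
       - Derive_n (w t) 2 x
       - beta * L2proj k a b (fun y => (v t y ^ 2 + w t y ^ 2) * w t y) x
     /\
     Derive (fun s => w s x) t =
         Derive_n (v t) 2 x
       + beta * L2proj k a b (fun y => (v t y ^ 2 + w t y ^ 2) * v t y) x) ->
  forall t1 t2, in_open_interval lo hi t1 -> in_open_interval lo hi t2 ->
    mass a b (v t1) (w t1) = mass a b (v t2) (w t2) /\
    momentum a b (v t1) (w t1) = momentum a b (v t2) (w t2) /\
    energy a b beta (v t1) (w t1) = energy a b beta (v t2) (w t2).
Proof.
  intros Hab Hreg v w Hgal t1 t2 H1 H2.
  (* Only the differentiability of the coefficients is needed. *)
  assert (Hcv : forall t, in_open_interval lo hi t -> derivable_coefs k t cv)
    by (intros t Ht n Hn; apply (Hreg n t Hn Ht)).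
  assert (Hcw : forall t, in_open_interval lo hi t -> derivable_coefs k t cw)
    by (intros t Ht n Hn; apply (Hreg n t Hn Ht)).
  split; [|split].
  - apply (eq_on_open_interval_of_is_derive_0 (fun s => mass a b (v s) (w s)) lo hi); auto.
    intros t Ht; exact (mass_rate a b beta k cv cw t Hab (Hcv t Ht) (Hcw t Ht) (fun x => Hgal t x Ht)).
  - apply (eq_on_open_interval_of_is_derive_0 (fun s => momentum a b (v s) (w s)) lo hi); auto.
    intros t Ht; exact (momentum_rate a b beta k cv cw t Hab (Hcv t Ht) (Hcw t Ht) (fun x => Hgal t x Ht)).
  - apply (eq_on_open_interval_of_is_derive_0 (fun s => energy a b beta (v s) (w s)) lo hi); auto.
    intros t Ht; exact (energy_rate a b beta k cv cw t Hab (Hcv t Ht) (Hcw t Ht) (fun x => Hgal t x Ht)).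
Qed.
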